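(* Fix $k\in\mathbb{N}$, let $m=\bigl[\frac{k+1}2\bigr]$, write $\bar c_k(a):=c_k^{\mathrm{EH}}(E(a,1))/(m\pi)$ for $a\in(0,1]$, and for $l=1,\dots,m$ let $[a_l,b_l]$ denote the interval of those $a$ on which $\bar c_k(a)=\frac lm$. For a normalized generalized symplectic capacity $c$ on $\mathit{Ell}^4$ write $c(a):=c(E(a,1))$. Then: (a) $\bar c_k(a)\le c(a)$ for all $a\in(0,1]$, for every such $c$ satisfying $\bar c_k(a_l)\le c(a_l)$ for all $l=1,\dots,\bigl[\frac{k+1}2\bigr]$; (b) $\bar c_k(a)\ge c(a)$ for all $a\in(0,1]$, for every such $c$ satisfying $\bar c_k(b_l)\ge c(b_l)$ for all $l=1,\dots,\bigl[\frac k2\bigr]$ and $\lim_{a\to0}\frac{c(a)}{a}\le\frac{k}{[\frac{k+1}2]}$.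
   Context: $E(a_1,a_2)=\{z\in\mathbb{C}^2:|z_1|^2/a_1+|z_2|^2/a_2<1\}$, $0<a_1\le a_2\le\infty$. $\mathit{Ell}^4$ is the category of ellipsoids in $(\mathbb{R}^4,\omega_0)$ with morphisms the symplectic embeddings induced by global symplectomorphisms of $\mathbb{R}^4$, where $(U,\alpha^2\omega_0)$ is identified with $\alpha U$. A generalized symplectic capacity is a map $c:\mathit{Ell}^4\to[0,\infty]$ with $c(U)\le c(V)$ whenever there is a morphism $U\to V$ and $c(\alpha U)=\alpha^2c(U)$ for $\alpha>0$; it is normalized if $c(E(1,1))=1$. Ekeland–Hofer capacities on ellipsoids: writing the numbers $j a_i\pi$ ($j\in\mathbb{N}$, $i=1,2$) in increasing order with repetitions as $d_1\le d_2\le\dots$, $c_k^{\mathrm{EH}}(E(a_1,a_2))=d_k$. $[x]$ is the largest integer $\le x$. *)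

From HB Require Import structures.
From mathcomp Require Import all_boot all_order all_algebra.
From mathcomp Require Import all_classical all_reals all_analysis.
Set Implicit Arguments. Unset Strict Implicit. Unset Printing Implicit Defensive.
Import Order.TTheory GRing.Theory Num.Theory.
Import numFieldNormedType.Exports.
Local Open Scope classical_set_scope.
Local Open Scope ring_scope.

Section Ell.
Variable R : realType.

(* R^4 = C^2 with coordinates (x1, y1, x2, y2), z_j = x_j + i y_j *)
Definition R4 := 'rV[R]_4.
Definition coord (u : R4) (i : nat) : R := u ord0 (inord i).

Definition omega0 (u v : R4) : R :=
  coord u 0 * coord v 1 - coord u 1 * coord v 0
  + coord u 2 * coord v 3 - coord u 3 * coord v 2.

Definition iterD (f : R4 -> R4) (l : seq R4) : R4 -> R4 :=
  foldr (fun v g => 'D_v g) f l.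

Definition smooth (f : R4 -> R4) : Prop :=
  forall l : seq R4, continuous (iterD f l) /\
    forall x v : R4, derivable (iterD f l) x v.

Definition symplectomorphism (phi : R4 -> R4) : Prop :=
  smooth phi /\
  (exists psi : R4 -> R4, smooth psi /\ cancel phi psi /\ cancel psi phi) /\
  (forall x u v : R4, omega0 ('D_u phi x) ('D_v phi x) = omega0 u v).

Definition ellipsoid (a1 : R) (a2 : \bar R) : set R4 :=
  [set z | (coord z 0 ^+ 2 + coord z 1 ^+ 2) / a1
           + (match a2 with
              | EFin r => (coord z 2 ^+ 2 + coord z 3 ^+ 2) / r
              | _ => 0 end) < 1].

Definition ell_obj (a1 : R) (a2 : \bar R) : Prop := 0 < a1 /\ (a1%:E <= a2)%E.

Definition ell_morph (a1 : R) (a2 : \bar R) (b1 : R) (b2 : \bar R) : Prop :=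
  exists phi : R4 -> R4, symplectomorphism phi /\
    phi @` ellipsoid a1 a2 `<=` ellipsoid b1 b2.

(* generalized symplectic capacity on Ell^4, c(E(a1,a2)) = c a1 a2;
   alpha E(a1,a2) = E(alpha^2 a1, alpha^2 a2) *)
Definition gen_capacity (c : R -> \bar R -> \bar R) : Prop :=
  [/\ (forall a1 a2, ell_obj a1 a2 -> (0 <= c a1 a2)%E),
      (forall a1 a2 b1 b2, ell_obj a1 a2 -> ell_obj b1 b2 ->
          ell_morph a1 a2 b1 b2 -> (c a1 a2 <= c b1 b2)%E) &
      (forall alpha a1 a2, 0 < alpha -> ell_obj a1 a2 ->
          c (alpha ^+ 2 * a1) ((alpha ^+ 2)%:E * a2)%E
          = ((alpha ^+ 2)%:E * c a1 a2)%E)].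

Definition normalized (c : R -> \bar R -> \bar R) : Prop := c 1 1%:E = 1%:E.

(* Ekeland-Hofer capacity c_k^EH(E(a1,a2)), a1,a2 finite, k >= 1:
   k-th element of the increasing sequence (with repetitions) of the
   j a_i pi; only j <= k can contribute to the first k elements. *)
Definition EH (k : nat) (a1 a2 : R) : R :=
  nth 0 (sort <=%R ([seq j%:R * a1 * pi | j <- iota 1 k]
                    ++ [seq j%:R * a2 * pi | j <- iota 1 k])) k.-1.

Definition cbar (k : nat) (a : R) : R := EH k a 1 / (((k.+1)./2)%:R * pi).

End Ell.

(* On (0, 1], [EH k a 1 / pi] is piecewise linear in [a]: it equals [l] on the
   plateau [l/(k-l+1) <= a <= l/(k-l)] and [(k-l+1) a] on the ramp between the
   plateaus [l-1] and [l].  A generalized capacity is monotone under inclusion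
   of ellipsoids, and conformality together with [E(a, a/a') ⊆ E(a, 1)] makes
   [c(a)/a] nonincreasing.  On a plateau, monotonicity of [c] carries the
   hypothesis at [a_l] (for (a)) or at [b_l] (for (b)) over the whole plateau.
   On a ramp [cbar_k(a)/a] is constant, so monotonicity of [c(a)/a] carries it
   from [a_l] (for (a)) or from [b_(l-1)] (for (b)); on the first ramp, (b) uses
   the limit of [c(a)/a] at [0] instead. *)

From Pilot Require Import Defs.
From HB Require Import structures.
From mathcomp Require Import all_boot all_order all_algebra.
From mathcomp Require Import all_classical all_reals all_analysis.
From mathcomp Require Import zify ring.
Set Implicit Arguments.
Unset Strict Implicit.
Unset Printing Implicit Defensive.
Import Order.TTheory GRing.Theory Num.Theory.
Import numFieldNormedType.Exports.
Local Open Scope classical_set_scope.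
Local Open Scope ring_scope.

Section Capacity.
Variable R : realType.

Lemma iterD_id_or_cst (l : seq (R4 R)) :
  Defs.iterD id l = id \/ exists u : R4 R, Defs.iterD id l = cst u.
Proof.
elim: l => [|v l [IH|[u IH]]] /=; first by left.
- by right; exists v; rewrite IH; apply: funext => x; exact: derive_id.
- by right; exists 0; rewrite IH; apply: funext => x; exact: derive_cst.
Qed.

Lemma smooth_id : smooth (@id (R4 R)).
Proof.
move=> l; have [->|[u ->]] := iterD_id_or_cst l; split.
- by move=> x; exact: cvg_id.
- by move=> x v; exact: derivable_id.
- exact: cst_continuous.
- by move=> x v; exact: derivable_cst.
Qed.

Lemma symplectomorphism_id : symplectomorphism (@id (R4 R)).
Proof.
split; first exact: smooth_id.
split; first by exists id; split; first exact: smooth_id.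
by move=> x u v; rewrite !derive_id.
Qed.

Lemma ellipsoid_sub (a a' r r' : R) : 0 < a -> a <= a' -> 0 < r -> r <= r' ->
  ellipsoid a r%:E `<=` ellipsoid a' r'%:E.
Proof.
move=> a0 aa' r0 rr' z; rewrite /ellipsoid /=; apply: le_lt_trans.
have sqr_sum_ge0 i j : 0 <= Defs.coord z i ^+ 2 + Defs.coord z j ^+ 2.
  by rewrite addr_ge0 ?sqr_ge0.
apply: lerD; rewrite ler_wpM2l // lef_pV2 // posrE.
- exact: lt_le_trans aa'.
- exact: lt_le_trans rr'.
Qed.

Variable c : R -> \bar R -> \bar R.
Hypothesis hc : gen_capacity c.

Lemma capacity_le (a a' r r' : R) : 0 < a -> a <= a' -> a <= r -> a' <= r' -> r <= r' ->
  (c a r%:E <= c a' r'%:E)%E.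
Proof.
move=> a0 aa' ar a'r' rr'; have r0 : 0 < r := lt_le_trans a0 ar.
case: hc => _ + _; apply.
- by split; rewrite ?lee_fin.
- by split; rewrite ?lee_fin // (lt_le_trans a0).
- exists id; split; first exact: symplectomorphism_id.
  by rewrite image_id; exact: ellipsoid_sub.
Qed.

Lemma capacityZ (t a r : R) : 0 < t -> 0 < a <= r ->
  c (t * a) (t * r)%:E = (t%:E * c a r%:E)%E.
Proof.
move=> t0 /andP[a0 ar]; case: hc => _ _ /(_ (Num.sqrt t) a r%:E).
rewrite sqr_sqrtr ?ltW // sqrtr_gt0 t0 => /(_ isT); apply.
by split; rewrite ?lee_fin.
Qed.

Definition slope (a : R) : \bar R := (c a 1%:E * (a^-1)%:E)%E.

Lemma slope_nonincr (a a' : R) : 0 < a -> a <= a' -> a' <= 1 -> (slope a' <= slope a)%E.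
Proof.
move=> a0 aa' a'1; have a'0 := lt_le_trans a0 aa'.
have t0 : 0 < a / a' by rewrite divr_gt0.
have c_le : ((a / a')%:E * c a' 1%:E <= c a 1%:E)%E.
  rewrite -capacityZ ?a'0 // divfK ?gt_eqF // mulr1.
  apply: capacity_le => //.
  - by rewrite ler_pdivlMr // ler_piMr // ltW.
  - exact: le_trans a'1.
  - by rewrite ler_pdivrMr // mul1r.
by rewrite /slope lee_pdivlMr // -muleA -EFinM muleC mulrC.
Qed.

Lemma le_slopeE (a s : R) : 0 < a -> (s%:E <= slope a)%E = ((s * a)%:E <= c a 1%:E)%E.
Proof. by move=> a0; rewrite /slope lee_pdivlMr // EFinM. Qed.

Lemma slope_leE (a s : R) : 0 < a -> (slope a <= s%:E)%E = (c a 1%:E <= (s * a)%:E)%E.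
Proof. by move=> a0; rewrite /slope lee_pdivrMr // EFinM. Qed.

Lemma slope_le_lim (a : R) (L : \bar R) : 0 < a <= 1 -> slope x @[x --> 0^'+] --> L ->
  (slope a <= L)%E.
Proof.
move=> /andP[a0 a1] slopeL; rewrite -(cvg_lim (@ereal_hausdorff R) slopeL).
apply: lime_ge; first exact: cvgP slopeL.
near=> x; apply: slope_nonincr a1.
- by near: x; exact: nbhs_right_gt.
- by apply: ltW; near: x; exact: nbhs_right_lt.
Unshelve. all: by end_near.
Qed.

End Capacity.

Lemma nth_sorted_count d (T : orderType d) (x0 x : T) (s : seq T) (i : nat) :
  sorted <=%O s ->
  (count (fun y => (y < x)%O) s <= i < count (fun y => (y <= x)%O) s)%N ->
  nth x0 s i = x.
Proof.
elim: s i => [|y s IH] i /= s_sorted; first by rewrite ltn0 ?andbF.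
have y_le : all (fun z => (y <= z)%O) s by apply: order_path_min => //; exact: le_trans.
have {}IH i := IH i (path_sorted s_sorted).
have count0 (P : pred T) : (forall z, (y <= z)%O -> ~~ P z) -> count P s = 0%N.
  move=> notP; apply/eqP; rewrite -leqn0 leqNgt -has_count.
  by apply/hasPn => z /(allP y_le); exact: notP.
case: (ltgtP y x) => [yx|xy|eq_yx] /=; last subst y.
- by rewrite !add1n; case: i => [|i]; rewrite ?ltnS ?ltn0 // => /IH.
- rewrite (count0 (fun z => z <= x)%O) ?addn0 ?ltn0 ?andbF // => z yz.
  by rewrite -ltNge; exact: lt_le_trans yz.
- have c0 : count (fun z => z < x)%O s = 0%N by apply: count0 => z; rewrite -leNgt.
  rewrite c0 add1n; case: i => [|i] // /andP[_]; rewrite ltnS => lt_i.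
  by apply: IH; rewrite c0 lt_i.
Qed.

Lemma leq_count_iota (P : pred nat) (k p : nat) : (p <= k)%N ->
  (forall j, (1 <= j <= p)%N -> P j) -> (p <= count P (iota 1 k))%N.
Proof.
move=> pk HP; rewrite -(subnKC pk) iotaD count_cat.
suff -> : count P (iota 1 p) = p by exact: leq_addr.
rewrite -[RHS](size_iota 1 p) -count_predT; apply: eq_in_count => j.
by rewrite mem_iota add1n ltnS => /HP.
Qed.

Lemma count_iota_leq (P : pred nat) (k p : nat) :
  (forall j, (p < j)%N -> ~~ P j) -> (count P (iota 1 k) <= p)%N.
Proof.
move=> HP; have [kp|pk] := leqP k p.
  by apply: leq_trans (count_size _ _) _; rewrite size_iota.
rewrite -(subnKC (ltnW pk)) iotaD count_cat.
have -> : count P (iota (1 + p) (k - p)) = 0%N.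
  apply/eqP; rewrite -leqn0 leqNgt -has_count; apply/hasPn => j.
  by rewrite mem_iota add1n => /andP[/HP].
by rewrite addn0 (leq_trans (count_size _ _)) ?size_iota.
Qed.

Section EkelandHofer.
Variables (R : realType) (k : nat).

Lemma EH_eq_count (a b y : R) :
  (count (fun j : nat => j%:R * a < y)%R (iota 1 k)
     + count (fun j : nat => j%:R * b < y)%R (iota 1 k) <= k.-1 <
   count (fun j : nat => j%:R * a <= y)%R (iota 1 k)
     + count (fun j : nat => j%:R * b <= y)%R (iota 1 k))%N ->
  EH k a b = y * pi.
Proof.
move=> counts; apply: nth_sorted_count; first exact: (sort_sorted (@le_total _ R)).
rewrite !(permP (permEl (perm_sort _ _))) !count_cat !count_map.
have pi_gt0 := @pi_gt0 R.
have lt_pi u : (fun j : nat => j%:R * u * pi < y * pi) =1 (fun j : nat => j%:R * u < y).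
  by move=> j /=; rewrite ltr_pM2r.
have le_pi u : (fun j : nat => j%:R * u * pi <= y * pi) =1 (fun j : nat => j%:R * u <= y).
  by move=> j /=; rewrite ler_pM2r.
by rewrite !(eq_count (lt_pi _)) !(eq_count (le_pi _)).
Qed.

Definition plateau (l : nat) (a : R) :=
  (l%:R <= (k - l).+1%:R * a) && ((k - l)%:R * a <= l%:R).

Definition ramp (l : nat) (a : R) :=
  (l.-1%:R < (k - l).+1%:R * a) && ((k - l).+1%:R * a < l%:R).

Lemma plateau_start (l : nat) : plateau l (l%:R / (k - l).+1%:R : R).
Proof.
have kl0 : 0 < (k - l).+1%:R :> R by rewrite ltr0n.
rewrite /plateau mulrC divfK ?gt_eqF // lexx /= mulrCA ler_piMr ?ler0n //.
by rewrite ler_pdivrMr // mul1r ler_nat.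
Qed.

Lemma plateau_end (l : nat) : (0 < l <= k)%N ->
  plateau l.-1 (l.-1%:R / (k - l).+1%:R : R).
Proof.
move=> l_range; have kl0 : 0 < (k - l).+1%:R :> R by rewrite ltr0n.
rewrite /plateau (_ : (k - l.-1)%N = (k - l).+1); last by lia.
rewrite [X in _ && (X <= _)]mulrC divfK ?gt_eqF // lexx andbT.
by rewrite mulrCA ler_peMr ?ler0n // ler_pdivlMr // mul1r ler_nat.
Qed.

Lemma EH_plateau (l : nat) (a : R) : 0 < a -> (1 <= l <= k)%N ->
  plateau l a -> EH k a 1 = l%:R * pi.
Proof.
move=> a0 /andP[l1 lk] /andP[la al]; apply: EH_eq_count.
have lt1 : (count (fun j : nat => j%:R * a < l%:R)%R (iota 1 k) <= k - l)%N.
  apply: count_iota_leq => j lt_j /=; rewrite -leNgt (le_trans la) // ler_pM2r // ler_nat.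
  exact: lt_j.
have lt2 : (count (fun j : nat => j%:R * (1 : R) < l%:R)%R (iota 1 k) <= l.-1)%N.
  by apply: count_iota_leq => j lt_j /=; rewrite mulr1 ltr_nat -leqNgt; lia.
have le1 : (k - l <= count (fun j : nat => j%:R * a <= l%:R)%R (iota 1 k))%N.
  apply: leq_count_iota (leq_subr _ _) _ => j /andP[_ j_le] /=.
  by apply: le_trans al; rewrite ler_pM2r // ler_nat.
have le2 : (l <= count (fun j : nat => j%:R * (1 : R) <= l%:R)%R (iota 1 k))%N.
  by apply: leq_count_iota => // j /andP[_ j_le] /=; rewrite mulr1 ler_nat.
apply/andP; split.
- by apply: leq_trans (leq_add lt1 lt2) _; lia.
- by apply: leq_trans (leq_add le1 le2); lia.
Qed.

Lemma EH_ramp (l : nat) (a : R) : 0 < a -> (1 <= l <= k)%N ->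
  ramp l a -> EH k a 1 = (k - l).+1%:R * a * pi.
Proof.
move=> a0 /andP[l1 lk] /andP[la al]; apply: EH_eq_count.
set y := (k - l).+1%:R * a.
have lt1 : (count (fun j : nat => j%:R * a < y)%R (iota 1 k) <= k - l)%N.
  by apply: count_iota_leq => j lt_j /=; rewrite -leNgt ler_pM2r // ler_nat.
have lt2 : (count (fun j : nat => j%:R * (1 : R) < y)%R (iota 1 k) <= l.-1)%N.
  apply: count_iota_leq => j lt_j /=; rewrite mulr1 -leNgt (le_trans (ltW al)) //.
  by rewrite ler_nat; lia.
have le1 : ((k - l).+1 <= count (fun j : nat => j%:R * a <= y)%R (iota 1 k))%N.
  apply: leq_count_iota => [|j /andP[_ j_le] /=]; first lia.
  by rewrite ler_pM2r // ler_nat.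
have le2 : (l.-1 <= count (fun j : nat => j%:R * (1 : R) <= y)%R (iota 1 k))%N.
  apply: leq_count_iota => [|j /andP[_ j_le] /=]; first lia.
  by rewrite mulr1 (le_trans _ (ltW la)) // ler_nat.
apply/andP; split.
- by apply: leq_trans (leq_add lt1 lt2) _; lia.
- by apply: leq_trans (leq_add le1 le2); lia.
Qed.

Local Notation m := (k.+1)./2.

Lemma cbar_plateau (l : nat) (a : R) : 0 < a -> (1 <= l <= m)%N ->
  plateau l a -> cbar k a = l%:R / m%:R.
Proof.
move=> a0 l_range pl; rewrite /cbar (EH_plateau a0 _ pl); last lia.
have m0 : m%:R != 0 :> R by rewrite pnatr_eq0; lia.
have := @pi_gt0 R; move: (pi : R) => p /gt_eqF p0.
by field; rewrite m0 p0.
Qed.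

Lemma cbar_ramp (l : nat) (a : R) : 0 < a -> (1 <= l <= m)%N ->
  ramp l a -> cbar k a = (k - l).+1%:R / m%:R * a.
Proof.
move=> a0 l_range rl; rewrite /cbar (EH_ramp a0 _ rl); last lia.
have m0 : m%:R != 0 :> R by rewrite pnatr_eq0; lia.
have := @pi_gt0 R; move: (pi : R) => p /gt_eqF p0.
by field; rewrite m0 p0.
Qed.

Lemma cbar_ramp_bounds (l : nat) (a : R) : 0 < a -> (1 <= l <= m)%N ->
  ramp l a -> l.-1%:R / m%:R < cbar k a < l%:R / m%:R.
Proof.
move=> a0 l_range rl; rewrite (cbar_ramp a0 l_range rl) mulrAC.
have m0 : 0 < m%:R :> R by rewrite ltr0n; lia.
by rewrite !ltr_pM2r ?invr_gt0.
Qed.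

Lemma plateau_or_ramp (a : R) : (0 < k)%N -> 0 < a <= 1 ->
  exists2 l, (1 <= l <= m)%N & plateau l a || ramp l a.
Proof.
move=> k0 /andP[a0 a1].
pose P l := (k - l)%:R * a <= l%:R.
have Pm : P m.
  apply: le_trans (_ : (k - m)%:R <= _); first by rewrite ler_piMr.
  by rewrite ler_nat; lia.
have [l Pl l_min] := ex_minnP (ex_intro P m Pm).
have l0 : (0 < l)%N.
  rewrite lt0n; apply/negP => /eqP l0; move: Pl; rewrite /P l0 subn0 mulr0n.
  by rewrite leNgt mulr_gt0 // ltr0n.
have lm : (l <= m)%N := l_min m Pm.
have ramp_lo : l.-1%:R < (k - l).+1%:R * a.
  have : ~~ P l.-1 by apply/negP => /l_min; lia.
  by rewrite /P -ltNge (_ : (k - l.-1 = (k - l).+1)%N) //; lia.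
exists l; first by rewrite l0 lm.
by rewrite /plateau /ramp ramp_lo [_ <= l%:R]Pl andbT; case: leP.
Qed.

End EkelandHofer.

Section Plateaus.
Variables (R : realType) (k : nat) (al bl : nat -> R).
Local Notation m := (k.+1)./2.
Hypothesis level_setE : forall l : nat, (1 <= l <= m)%N ->
  [set a : R | 0 < a <= 1 /\ cbar k a = l%:R / m%:R] = [set` `[al l, bl l]].

Lemma plateau_in_itv (l : nat) (x : R) : (1 <= l <= m)%N -> 0 < x <= 1 ->
  plateau k l x -> al l <= x <= bl l.
Proof.
move=> l_range x01 pl; have /andP[x0 _] := x01.
have : [set` `[al l, bl l]] x by rewrite -level_setE //; split => //; exact: cbar_plateau.
by rewrite /= in_itv.
Qed.

Lemma cbar_on_itv (l : nat) (x : R) : (1 <= l <= m)%N -> al l <= x <= bl l ->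
  0 < x <= 1 /\ cbar k x = l%:R / m%:R.
Proof.
move=> l_range x_itv.
by have : [set a : R | 0 < a <= 1 /\ cbar k a = l%:R / m%:R] x by rewrite level_setE //= in_itv.
Qed.

Lemma plateau_start_in_itv (l : nat) : (1 <= l <= m)%N ->
  al l <= l%:R / (k - l).+1%:R <= bl l.
Proof.
move=> l_range; apply: plateau_in_itv; rewrite ?plateau_start //.
rewrite divr_gt0 ?ltr0n //=; last lia.
by rewrite ler_pdivrMr ?ltr0n // mul1r ler_nat; lia.
Qed.

Lemma plateau_end_in_itv (l : nat) : (2 <= l <= m)%N ->
  al l.-1 <= l.-1%:R / (k - l).+1%:R <= bl l.-1.
Proof.
move=> l_range; apply: plateau_in_itv; rewrite ?plateau_end //; try lia.
rewrite divr_gt0 ?ltr0n //=; try lia.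
by rewrite ler_pdivrMr ?ltr0n // mul1r ler_nat; lia.
Qed.

Lemma al_plateau (l : nat) : (1 <= l <= m)%N ->
  0 < al l <= 1 /\ cbar k (al l) = l%:R / m%:R.
Proof.
move=> l_range; have /andP[al_le le_bl] := plateau_start_in_itv l_range.
by apply: cbar_on_itv => //; rewrite lexx (le_trans al_le le_bl).
Qed.

Lemma bl_plateau (l : nat) : (1 <= l <= m)%N ->
  0 < bl l <= 1 /\ cbar k (bl l) = l%:R / m%:R.
Proof.
move=> l_range; have /andP[al_le le_bl] := plateau_start_in_itv l_range.
by apply: cbar_on_itv => //; rewrite lexx (le_trans al_le le_bl).
Qed.

Lemma ramp_lt_al (l : nat) (a : R) : (1 <= l <= m)%N -> 0 < a -> ramp k l a ->
  a < al l.
Proof.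
move=> l_range a0 rl; rewrite ltNge; apply/negP => al_le.
have /andP[_ a_lt] := rl.
have /andP[_ le_bl] := plateau_start_in_itv l_range.
have a_le : a <= bl l by rewrite (le_trans _ le_bl) // ler_pdivlMr ?ltr0n // mulrC ltW.
have [_ cbar_a] := cbar_on_itv l_range (introT andP (conj al_le a_le)).
by have := cbar_ramp_bounds a0 l_range rl; rewrite cbar_a ltxx andbF.
Qed.

Lemma bl_lt_ramp (l : nat) (a : R) : (2 <= l <= m)%N -> 0 < a -> ramp k l a ->
  bl l.-1 < a.
Proof.
move=> l_range a0 rl; rewrite ltNge; apply/negP => le_bl.
have /andP[a_gt _] := rl.
have /andP[al_le _] := plateau_end_in_itv l_range.
have l1_range : (1 <= l.-1 <= m)%N by lia.
have le_a : al l.-1 <= a by rewrite (le_trans al_le) // ler_pdivrMr ?ltr0n // mulrC ltW.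
have [_ cbar_a] := cbar_on_itv l1_range (introT andP (conj le_a le_bl)).
have l_range' : (1 <= l <= m)%N by lia.
by have := cbar_ramp_bounds a0 l_range' rl; rewrite cbar_a ltxx.
Qed.

Variable c : R -> \bar R -> \bar R.
Hypothesis hc : gen_capacity c.
Hypothesis hk : (0 < k)%N.

Lemma cbar_le_capacity :
  (forall l : nat, (1 <= l <= m)%N -> ((cbar k (al l))%:E <= c (al l) 1%:E)%E) ->
  forall a : R, 0 < a <= 1 -> ((cbar k a)%:E <= c a 1%:E)%E.
Proof.
move=> cbar_le_al a a01; have /andP[a0 a1] := a01.
have [l l_range /orP[pl|rl]] := plateau_or_ramp hk a01.
  have /andP[al_le _] := plateau_in_itv l_range a01 pl.
  have [/andP[al0 _] cbar_al] := al_plateau l_range.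
  rewrite (cbar_plateau a0 l_range pl) -cbar_al.
  apply: le_trans (cbar_le_al l l_range) _.
  by apply: (capacity_le hc) => //; exact: le_trans a1.
have [/andP[al0 al1] cbar_al] := al_plateau l_range.
have a_lt := ramp_lt_al l_range a0 rl.
rewrite (cbar_ramp a0 l_range rl) -le_slopeE //.
apply: le_trans (slope_nonincr hc a0 (ltW a_lt) al1).
rewrite le_slopeE //; apply: le_trans (cbar_le_al l l_range).
rewrite cbar_al lee_fin mulrAC ler_pM2r ?invr_gt0 ?ltr0n; last lia.
have /andP[al_le _] := plateau_start_in_itv l_range.
by rewrite mulrC -ler_pdivlMr ?ltr0n.
Qed.

Hypothesis hn : normalized c.

Lemma capacity_le_cbar :
  (forall l : nat, (1 <= l <= k./2)%N -> (c (bl l) 1%:E <= (cbar k (bl l))%:E)%E) ->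
  forall L : \bar R, slope c x @[x --> 0^'+] --> L -> (L <= (k%:R / m%:R)%:E)%E ->
  forall a : R, 0 < a <= 1 -> (c a 1%:E <= (cbar k a)%:E)%E.
Proof.
move=> le_cbar_bl L slopeL L_le a a01; have /andP[a0 a1] := a01.
have [l l_range /orP[pl|rl]] := plateau_or_ramp hk a01.
  rewrite (cbar_plateau a0 l_range pl).
  have [l_half|l_max] := leqP l k./2.
    have /andP[_ le_bl] := plateau_in_itv l_range a01 pl.
    have [/andP[_ bl1] <-] := bl_plateau l_range.
    apply: le_trans (le_cbar_bl l _); last lia.
    by apply: (capacity_le hc) => //; exact: le_trans bl1.
  rewrite (_ : l = m); last lia.
  rewrite divff ?pnatr_eq0 -?lt0n; last lia.
  by rewrite -[X in (_ <= X)%E]hn; apply: (capacity_le hc).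
rewrite (cbar_ramp a0 l_range rl) -slope_leE //.
have [l1|l_ge2] := leqP l 1.
  have -> : (k - l).+1 = k by lia.
  exact: le_trans (slope_le_lim hc a01 slopeL) L_le.
have l_range' : (2 <= l <= m)%N by lia.
have l1_range : (1 <= l.-1 <= m)%N by lia.
have [/andP[bl0 bl1] cbar_bl] := bl_plateau l1_range.
apply: le_trans (slope_nonincr hc bl0 (ltW (bl_lt_ramp l_range' a0 rl)) a1) _.
apply: (@le_trans _ _ (l.-1%:R / m%:R / bl l.-1)%:E).
  rewrite slope_leE // divfK ?gt_eqF // -cbar_bl.
  by apply: le_cbar_bl; lia.
have /andP[_ le_bl] := plateau_end_in_itv l_range'.
rewrite lee_fin mulrAC ler_pM2r ?invr_gt0 ?ltr0n; last lia.
by rewrite ler_pdivrMr // mulrC -ler_pdivrMr ?ltr0n.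
Qed.

End Plateaus.

Theorem mainTheorem8 (R : realType) (k : nat) (hk : (0 < k)%N)
  (al bl : nat -> R)
  (hint : forall l : nat, (1 <= l <= (k.+1)./2)%N ->
     [set a : R | 0 < a <= 1 /\ cbar k a = l%:R / ((k.+1)./2)%:R]
       = [set` `[al l, bl l]])
  (c : R -> \bar R -> \bar R) (hc : gen_capacity c) (hn : normalized c) :
  ((forall l : nat, (1 <= l <= (k.+1)./2)%N ->
        ((cbar k (al l))%:E <= c (al l) 1%:E)%E) ->
     forall a : R, 0 < a <= 1 -> ((cbar k a)%:E <= c a 1%:E)%E)
  /\
  ((forall l : nat, (1 <= l <= k./2)%N ->
        (c (bl l) 1%:E <= (cbar k (bl l))%:E)%E) ->
   (exists L : \bar R,
        (fun a : R => (c a 1%:E * (a^-1)%:E)%E) x @[x --> 0^'+] --> L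
        /\ (L <= (k%:R / ((k.+1)./2)%:R)%:E)%E) ->
     forall a : R, 0 < a <= 1 -> (c a 1%:E <= (cbar k a)%:E)%E).
Proof.
split=> [cbar_le_al | le_cbar_bl [L [slopeL L_le]]].
  exact: (cbar_le_capacity hint hc hk cbar_le_al).
exact: (capacity_le_cbar hint hc hk hn le_cbar_bl slopeL L_le).
Qed.
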